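(* Let $T>0$. Let $k,B:[0,T]\to(0,\infty)$ be smooth positive functions of $t$ only, where, writing $y=t-T\in[-T,0]$, $B$ satisfies $B''=k^2B$ with $B=1$ and $B'=0$ at $y=0$ (so that $B'(t)\le 0$ on $[0,T]$), and suppose that $\ln(B^2k)$ is nondecreasing and smooth on $[0,T]$. Consider the system $$\rho_t+m_x=R(\rho,m,t):=-\rho\frac{k'}{k}+\frac{m^2-1}{\rho}BB',\qquad m_t+\Big(\frac{m^2-1}{\rho}\Big)_x=S(\rho,m,t):=-2m\Big(\frac{B'}{B}+\frac{k'}{2k}\Big),$$ with initial data $(\rho,m)(x,0)=(\rho_0,m_0)(x)$, $\rho_0>0$, and let $(\rho^l,m^l)$ be the approximate solutions given by the fractional-step Lax--Friedrichs scheme described in the context. Suppose that for some constants $\delta_0>0$, $P_0>0$ and all $x\in\mathbb{R}$, $$\delta_0\le w(x,0)\le P_0,\quad -P_0\le z(x,0)\le 0\qquad(\text{or } 0\le w(x,0)\le P_0,\quad -P_0\le z(x,0)\le -\delta_0),$$ where $w(x,0)=\frac{m_0(x)+1}{\rho_0(x)}$, $z(x,0)=\frac{m_0(x)-1}{\rho_0(x)}$. Then there exist a constant $h_0>0$ and constants $P(T),A(T)>0$ such that for all time meshes $h\le h_0$ the Riemann invariants $w^l=\frac{m^l+1}{\rho^l}$, $z^l=\frac{m^l-1}{\rho^l}$ of the approximate solutions satisfy, for all $(x,t)\in\mathbb{R}\times[0,T]$, $$\delta_0e^{-A(T)T}\le w^l(x,t)\le P(T),\quad -P(T)\le z^l(x,t)\le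 0$$ (respectively, in the second case, $0\le w^l(x,t)\le P(T)$, $-P(T)\le z^l(x,t)\le -\delta_0e^{-A(T)T}$).
   Context: Notation: $'$ denotes $d/dt$ (equivalently $d/dy$). Write $U=(\rho,m)^\top$, $f(U)=(m,(m^2-1)/\rho)^\top$, $H(U,x,t)=(R,S)^\top$. The homogeneous system $\rho_t+m_x=0$, $m_t+((m^2-1)/\rho)_x=0$ (Chaplygin gas) has eigenvalues $\lambda_1=z=\frac{m-1}{\rho}$, $\lambda_2=w=\frac{m+1}{\rho}$; it is linearly degenerate, and its Riemann problems are solved by contact discontinuities (along which $z$, resp. $w$, is constant). Scheme: let $h>0$ (time mesh) and $l>0$ (space mesh) satisfy the CFL condition $\max_{i=1,2}\lambda_i(\rho^l,m^l)<l/(2h)\le\Lambda$ for a constant $\Lambda>0$. For integers $n\ge0$ and $j$ with $n+j$ even, let $Q_{nj}=\{(x,t):(j-1)l<x<(j+1)l,\ nh\le t<(n+1)h\}$. Set $U^0_j=U_0(jl)$ where $U_0=(\rho_0,m_0)$. Given the values $U^n_j$, in $Q_{nj}$ let $U^l_R$ be the Riemann solution of the homogeneous system with initial data $U^n_{j-1}$ for $x<jl$ and $U^n_{j+1}$ for $x>jl$ at $t=nh$, and define $U^l(x,t)=U^l_R(x,t)+H(U^l_R(x,t),x,t)(t-nh)$; then set $U^{n+1}_j=\frac{1}{2l}\int_{(j-1)l}^{(j+1)l}U^l(x,(n+1)h-0)\,dx$. The resulting piecewise-defined function $U^l=(\rho^l,m^l)$ on $\mathbb{R}\times[0,T]$ is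 the approximate solution. *)

From Stdlib Require Import Reals ZArith.
From Coquelicot Require Import Coquelicot.
Open Scope R_scope.

(* A state U = (rho, m). *)
Definition State := (R * R)%type.

(* Riemann invariants / eigenvalues: z = lambda_1, w = lambda_2. *)
Definition zinv (U : State) : R := (snd U - 1) / fst U.
Definition winv (U : State) : R := (snd U + 1) / fst U.

(* The state with Riemann invariants (w, z): rho = 2/(w-z), m = (w+z)/(w-z). *)
Definition state_of_wz (w z : R) : State := (2 / (w - z), (w + z) / (w - z)).

(* Self-similar Riemann solution of the homogeneous Chaplygin system at
   xi = x/t: a 1-contact of speed z_L (z constant across it), followed by a
   2-contact of speed w_R (w constant across it); the middle state has
   z = z_L and w = w_R. *)
Definition riemann_xi (UL UR : State) (xi : R) : State :=
  if Rlt_dec xi (zinv UL) then UL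
  else if Rlt_dec xi (winv UR) then state_of_wz (winv UR) (zinv UL)
  else UR.

Definition riemann_sol (UL UR : State) (x0 t0 x t : R) : State :=
  if Rle_dec t t0 then (if Rlt_dec x x0 then UL else UR)
  else riemann_xi UL UR ((x - x0) / (t - t0)).

Definition Rsrc (k B : R -> R) (U : State) (t : R) : R :=
  - fst U * Derive k t / k t + (snd U ^ 2 - 1) / fst U * B t * Derive B t.
Definition Ssrc (k B : R -> R) (U : State) (t : R) : R :=
  - 2 * snd U * (Derive B t / B t + Derive k t / (2 * k t)).

Definition cell_sol (k B : R -> R) (h l : R) (Un : Z -> State) (n : nat) (j : Z)
    (x t : R) : State :=
  let UR := riemann_sol (Un (j - 1)%Z) (Un (j + 1)%Z) (IZR j * l) (INR n * h) x t in
  (fst UR + Rsrc k B UR t * (t - INR n * h),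
   snd UR + Ssrc k B UR t * (t - INR n * h)).

Definition LF_step (k B : R -> R) (h l : R) (Un : Z -> State) (n : nat) : Z -> State :=
  fun j =>
    let a := (IZR j - 1) * l in
    let b := (IZR j + 1) * l in
    (RInt (fun x => fst (cell_sol k B h l Un n j x (INR (S n) * h))) a b / (2 * l),
     RInt (fun x => snd (cell_sol k B h l Un n j x (INR (S n) * h))) a b / (2 * l)).

Fixpoint LF_grid (k B : R -> R) (h l : R) (rho0 m0 : R -> R) (n : nat) : Z -> State :=
  match n with
  | O => fun j => (rho0 (IZR j * l), m0 (IZR j * l))
  | S n' => LF_step k B h l (LF_grid k B h l rho0 m0 n') n'
  end.

(* The approximate solution U^l(x,t): n = floor(t/h), and j the index with
   n + j even and (j-1) l <= x < (j+1) l. *)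
Definition LF_approx (k B : R -> R) (h l : R) (rho0 m0 : R -> R) (x t : R) : State :=
  let n := Z.to_nat (Int_part (t / h)) in
  let p : Z := if Nat.even n then 0%Z else 1%Z in
  let j := (2 * Int_part ((x / l - IZR p + 1) / 2) + p)%Z in
  cell_sol k B h l (LF_grid k B h l rho0 m0 n) n j x t.

(* CFL condition: the characteristic speeds of U^l on R x [0,T] stay below l/(2h). *)
Definition CFL (T : R) (k B : R -> R) (h l : R) (rho0 m0 : R -> R) : Prop :=
  forall x t, 0 <= t <= T ->
    Rabs (zinv (LF_approx k B h l rho0 m0 x t)) < l / (2 * h) /\
    Rabs (winv (LF_approx k B h l rho0 m0 x t)) < l / (2 * h).

From Stdlib Require Import Reals ZArith Lra Lia.
From Coquelicot Require Import Coquelicot.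
Open Scope R_scope.

(* In Riemann invariants the region {w >= a, z <= 0} is the set of states with
   rho > 0, m + 1 >= a rho and m <= 1: an intersection of half-planes in (rho, m), hence
   convex and preserved by the cell averages of the Lax-Friedrichs step.  The Riemann
   solutions of the Chaplygin gas only create the state whose w and z are taken from the two
   data, so they preserve it too.  A source step of length tau maps (w, z) to
   ((w - tau c (w + z)) / q, (z - tau c (w + z)) / q), where c = B'/B + k'/(2k) >= 0
   because ln (B^2 k) is nondecreasing, and q = 1 + O(tau) once |w|, |z| are bounded; so
   z stays <= 0 and w loses at most a factor e^(- A tau).  The CFL condition bounds
   |w|, |z| by Lam, which is both the constant P and what controls q.  The second case is
   the same argument with the roles of w and z exchanged. *)

Lemma derive_nonneg_of_monotone_on (g : R -> R) (T t D : R) :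
  0 < T -> 0 <= t <= T ->
  (forall s u, 0 <= s -> s <= u -> u <= T -> g s <= g u) ->
  is_derive g t D -> 0 <= D.
Proof.
  intros HT Ht Hmono Hd.
  apply is_derive_Reals in Hd.
  destruct (Rle_lt_dec 0 D) as [|HD]; [assumption | exfalso].
  destruct (Hd (- D / 2) ltac:(lra)) as [del Hdel].
  pose proof (cond_pos del) as Hdel0.
  assert (Hnear : exists e, e <> 0 /\ Rabs e < del /\ 0 <= t + e <= T).
  { destruct (Rlt_le_dec t T).
    - exists (Rmin (del / 2) (T - t)).
      pose proof (Rmin_l (del / 2) (T - t)); pose proof (Rmin_r (del / 2) (T - t)).
      assert (0 < Rmin (del / 2) (T - t)) by (apply Rmin_pos; lra).
      rewrite Rabs_pos_eq by lra. repeat split; lra.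
    - exists (- Rmin (del / 2) T).
      pose proof (Rmin_l (del / 2) T); pose proof (Rmin_r (del / 2) T).
      assert (0 < Rmin (del / 2) T) by (apply Rmin_pos; lra).
      rewrite Rabs_Ropp, Rabs_pos_eq by lra. repeat split; lra. }
  destruct Hnear as [e [He0 [Hedel HeT]]].
  specialize (Hdel e He0 Hedel).
  assert (Hquot : 0 <= (g (t + e) - g t) / e).
  { destruct (Rlt_or_le 0 e) as [Hpos | Hneg].
    - apply Rdiv_le_0_compat; [|lra]. pose proof (Hmono t (t + e)). lra.
    - replace ((g (t + e) - g t) / e) with ((g t - g (t + e)) / - e) by (field; lra).
      apply Rdiv_le_0_compat; [|lra]. pose proof (Hmono (t + e) t). lra. }
  apply Rabs_def2 in Hdel. lra.
Qed.

Lemma bounded_on_compact (f : R -> R) (T : R) : 0 <= T ->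
  (forall t, 0 <= t <= T -> continuity_pt f t) ->
  exists M, 0 <= M /\ forall t, 0 <= t <= T -> Rabs (f t) <= M.
Proof.
  intros HT Hc.
  destruct (continuity_ab_maj (fun t => Rabs (f t)) 0 T HT) as [tmax [Hmax _]].
  - intros t Ht. apply (continuity_pt_comp f Rabs); [auto | apply Rcontinuity_abs].
  - exists (Rabs (f tmax)). split; [apply Rabs_pos | exact Hmax].
Qed.

Lemma continuity_pt_of_ex_derive (f : R -> R) (t : R) : ex_derive f t -> continuity_pt f t.
Proof.
  intro H. apply continuity_pt_filterlim.
  exact (@ex_derive_continuous R_AbsRing R_NormedModule f t H).
Qed.

Lemma exp_decay_le (C K tau : R) : 0 <= C -> 0 <= K -> 0 <= tau -> tau * C <= 1 / 2 ->
  exp (- (2 * C + K) * tau) * (1 + tau * K) <= 1 - tau * C.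
Proof.
  intros HC HK Htau HtauC.
  replace (- (2 * C + K) * tau) with (- (2 * C * tau) + - (K * tau)) by ring.
  rewrite exp_plus, Rmult_assoc.
  pose proof (exp_pos (- (2 * C * tau))). pose proof (exp_pos (- (K * tau))).
  assert (HK1 : exp (- (K * tau)) * (1 + tau * K) <= 1).
  { pose proof (exp_ineq1_le (K * tau)).
    assert (exp (- (K * tau)) * exp (K * tau) = 1)
      by (rewrite <- exp_plus, Rplus_opp_l; apply exp_0).
    nra. }
  assert (HC1 : exp (- (2 * C * tau)) <= 1 - tau * C).
  { pose proof (exp_ineq1_le (2 * C * tau)).
    assert (exp (- (2 * C * tau)) * exp (2 * C * tau) = 1)
      by (rewrite <- exp_plus, Rplus_opp_l; apply exp_0).
    assert (0 <= tau * C) by nra. nra. }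
  nra.
Qed.

Definition source_step (kk bb c tau : R) (U : State) : State :=
  (fst U + (- fst U * kk + (snd U ^ 2 - 1) / fst U * bb) * tau,
   snd U + (- 2 * snd U * c) * tau).

Definition relax_rate (k B : R -> R) (t : R) : R := Derive B t / B t + Derive k t / (2 * k t).

Lemma cell_sol_source_step k B h l Un n j x t :
  cell_sol k B h l Un n j x t =
  source_step (Derive k t / k t) (B t * Derive B t) (relax_rate k B t) (t - INR n * h)
    (riemann_sol (Un (j - 1)%Z) (Un (j + 1)%Z) (IZR j * l) (INR n * h) x t).
Proof. unfold cell_sol, source_step, Rsrc, Ssrc, relax_rate, Rdiv. f_equal; ring. Qed.

Lemma source_step_wz (kk bb c tau : R) (U : State) :
  0 < fst U ->
  let w := winv U in let z := zinv U in
  let q := 1 - tau * kk + tau * (w * z * bb) in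
  q <> 0 ->
  fst (source_step kk bb c tau U) = fst U * q /\
  winv (source_step kk bb c tau U) = (w - tau * c * (w + z)) / q /\
  zinv (source_step kk bb c tau U) = (z - tau * c * (w + z)) / q.
Proof.
  intros Hr w z q Hq. subst w z q.
  destruct U as [rho m]. unfold winv, zinv, source_step in *. simpl in *.
  assert (Hq' : (1 - tau * kk) * (rho * rho) + tau * ((m + 1) * (m - 1) * bb) <> 0).
  { replace ((1 - tau * kk) * (rho * rho) + tau * ((m + 1) * (m - 1) * bb))
      with (rho * rho * (1 - tau * kk + tau * ((m + 1) / rho * ((m - 1) / rho) * bb)))
      by (field; lra).
    repeat apply Rmult_integral_contrapositive_currified; lra. }
  repeat split; field; try split; lra.
Qed.

Definition region (b : bool) (a : R) (U : State) : Prop :=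
  0 < fst U /\
  if b then a <= winv U /\ zinv U <= 0 else 0 <= winv U /\ zinv U <= - a.

Definition wz_bounded (L : R) (U : State) : Prop := Rabs (winv U) <= L /\ Rabs (zinv U) <= L.

Lemma region_anti (b : bool) (a a' : R) (U : State) : a' <= a -> region b a U -> region b a' U.
Proof. intros Ha [Hr H]. split; [exact Hr|]. destruct b; lra. Qed.

Lemma region_iff_affine (b : bool) (a : R) (U : State) : 0 < fst U ->
  region b a U <->
  if b then 0 <= - a * fst U + snd U + 1 /\ 0 <= - snd U + 1
  else 0 <= snd U + 1 /\ 0 <= - a * fst U - snd U + 1.
Proof.
  destruct U as [rho m]. unfold region, winv, zinv. simpl. intros Hr.
  pose proof (Rle_div_r a (m + 1) rho Hr). pose proof (Rle_div_r 0 (m + 1) rho Hr).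
  pose proof (Rle_div_l (m - 1) 0 rho Hr). pose proof (Rle_div_l (m - 1) (- a) rho Hr).
  destruct b; split; (intros [_ [? ?]] || intros [? ?]); repeat split; lra.
Qed.

Lemma fst_ge_of_wz_bounded (L : R) (U : State) : 0 < fst U -> wz_bounded L U -> 1 / L <= fst U.
Proof.
  destruct U as [rho m]. unfold wz_bounded, winv, zinv. simpl. intros Hr [Hw Hz].
  apply Rabs_le_between in Hw. apply Rabs_le_between in Hz.
  assert (Hwz : (m + 1) / rho - (m - 1) / rho = 2 / rho) by (field; lra).
  assert (H2 : 2 / rho <= 2 * L) by lra.
  assert (HL : 0 < L) by (assert (0 < 2 / rho) by (apply Rdiv_lt_0_compat; lra); lra).
  apply (Rle_div_l (2 : R) (2 * L) rho Hr) in H2.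
  apply Rle_div_l; lra.
Qed.

Lemma source_step_region (b : bool) (a L K C A kk bb c tau : R) (U : State) :
  0 < a -> region b a U -> wz_bounded L U ->
  Rabs kk + L * L * Rabs bb <= K -> 0 <= c <= C -> 2 * C + K <= A -> 0 <= tau ->
  tau * K <= 1 / 2 -> tau * C <= 1 / 2 ->
  fst U / 2 <= fst (source_step kk bb c tau U) /\
  region b (a * exp (- A * tau)) (source_step kk bb c tau U).
Proof.
  intros Ha [Hr HU] [Hw Hz] HK Hc HA Htau HtauK HtauC.
  set (w := winv U) in *. set (z := zinv U) in *.
  set (q := 1 - tau * kk + tau * (w * z * bb)).
  assert (Hsign : z <= 0 <= w) by (destruct b; lra).
  assert (Hwzb : Rabs (w * z * bb) <= L * L * Rabs bb).
  { rewrite !Rabs_mult. apply Rmult_le_compat_r; [apply Rabs_pos|].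
    apply Rmult_le_compat; auto using Rabs_pos. }
  assert (Hq : 1 - tau * K <= q <= 1 + tau * K).
  { pose proof (Rabs_pos bb). apply Rabs_le_between in Hwzb.
    destruct (Rabs_le_between kk (Rabs kk)) as [Hkk _]. specialize (Hkk (Rle_refl _)).
    unfold q. split; nra. }
  destruct (source_step_wz kk bb c tau U Hr ltac:(fold w z q; lra)) as [Erho [Ew Ez]].
  fold w z q in Erho, Ew, Ez. unfold region. rewrite Erho, Ew, Ez.
  assert (Hdecay : a * exp (- A * tau) * q <= a * (1 - tau * c)).
  { assert (HK0 : 0 <= K) by (pose proof (Rabs_pos kk); pose proof (Rabs_pos bb); nra).
    pose proof (exp_decay_le C K tau ltac:(lra) HK0 Htau HtauC).
    assert (exp (- A * tau) <= exp (- (2 * C + K) * tau)).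
    { assert (Hle : - A * tau <= - (2 * C + K) * tau) by nra.
      destruct (Rle_lt_or_eq_dec _ _ Hle) as [Hlt | ->]; [|lra].
      apply Rlt_le, exp_increasing, Hlt. }
    pose proof (exp_pos (- A * tau)).
    assert (exp (- A * tau) * q <= 1 - tau * c) by nra.
    rewrite Rmult_assoc. apply Rmult_le_compat_l; lra. }
  assert (0 <= tau * c <= 1 / 2) by nra.
  split; [nra|]. split; [nra|].
  assert (Hqpos : q > 0) by lra.
  assert (0 <= tau * c * w) by (apply Rmult_le_pos; lra).
  assert (0 <= tau * c * - z) by (apply Rmult_le_pos; lra).
  destruct b; split;
    first [apply (proj1 (Rle_div_r _ _ q Hqpos)) | apply (proj2 (Rle_div_l _ _ q Hqpos))].
  - assert (a * (1 - tau * c) <= w * (1 - tau * c)) by (apply Rmult_le_compat_r; lra). nra.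
  - nra.
  - nra.
  - assert (z * (1 - tau * c) <= - a * (1 - tau * c)) by (apply Rmult_le_compat_r; lra). nra.
Qed.

Lemma riemann_sol_cases (P : State -> Prop) (UL UR : State) (x0 t0 x t : R) :
  P UL -> P UR -> P (state_of_wz (winv UR) (zinv UL)) -> P (riemann_sol UL UR x0 t0 x t).
Proof.
  intros HL HR HM. unfold riemann_sol, riemann_xi.
  destruct (Rle_dec t t0); [destruct (Rlt_dec x x0); auto|].
  destruct (Rlt_dec _ (zinv UL)); auto. destruct (Rlt_dec _ (winv UR)); auto.
Qed.

Lemma state_of_wz_inv (w z : R) : z < w ->
  0 < fst (state_of_wz w z) /\ winv (state_of_wz w z) = w /\ zinv (state_of_wz w z) = z.
Proof.
  intro H. unfold state_of_wz, winv, zinv; simpl.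
  repeat split; [apply Rdiv_lt_0_compat; lra | field; lra | field; lra].
Qed.

Lemma riemann_sol_region (b : bool) (a L : R) (UL UR : State) (x0 t0 x t : R) :
  0 < a -> region b a UL -> region b a UR -> wz_bounded L UL -> wz_bounded L UR ->
  region b a (riemann_sol UL UR x0 t0 x t) /\ wz_bounded L (riemann_sol UL UR x0 t0 x t).
Proof.
  intros Ha [HrL HL] [HrR HR] BL BR.
  apply (riemann_sol_cases (fun U => region b a U /\ wz_bounded L U));
    [split; [split|] | split; [split|] | ]; auto.
  destruct (state_of_wz_inv (winv UR) (zinv UL)) as [Hr [Ew Ez]]; [destruct b; lra|].
  unfold region, wz_bounded. rewrite Ew, Ez.
  split; [split; [exact Hr | destruct b; lra] | split; [apply BR | apply BL]].
Qed.

Lemma ex_RInt_glue (f g1 g2 : R -> R) (p : R) :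
  (forall x, x < p -> f x = g1 x) -> (forall x, p <= x -> f x = g2 x) ->
  (forall a b, ex_RInt g1 a b) -> (forall a b, ex_RInt g2 a b) ->
  forall a b, ex_RInt f a b.
Proof.
  intros H1 H2 I1 I2.
  assert (Hle : forall a b, a <= b -> ex_RInt f a b).
  { intros a b Hab. set (c := Rmax a (Rmin b p)).
    assert (Hc : a <= c <= b) by (unfold c, Rmax, Rmin; repeat destruct Rle_dec; lra).
    assert (Hleft : forall x, a < x < c -> x < p)
      by (unfold c, Rmax, Rmin; intros x; repeat destruct Rle_dec; lra).
    assert (Hright : forall x, c < x < b -> p <= x)
      by (unfold c, Rmax, Rmin; intros x; repeat destruct Rle_dec; lra).
    apply (ex_RInt_Chasles _ a c b).
    - apply (ex_RInt_ext g1); [|apply I1].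
      rewrite Rmin_left, Rmax_right by lra. intros x Hx. symmetry. auto.
    - apply (ex_RInt_ext g2); [|apply I2].
      rewrite Rmin_left, Rmax_right by lra. intros x Hx. symmetry. auto. }
  intros a b. destruct (Rle_lt_dec a b); [auto|]. apply ex_RInt_swap, Hle. lra.
Qed.

Lemma ex_RInt_riemann_sol (G : State -> R) (UL UR : State) (x0 t0 t a b : R) :
  t0 < t -> ex_RInt (fun x => G (riemann_sol UL UR x0 t0 x t)) a b.
Proof.
  intros Ht. set (d := t - t0). assert (Hd : d > 0) by (unfold d; lra).
  assert (Hxi : forall x v, (x - x0) / (t - t0) < v <-> x < x0 + v * d).
  { intros x v. fold d. rewrite Rlt_div_l by exact Hd. split; lra. }
  set (g2 := fun x => G (if Rlt_dec ((x - x0) / (t - t0)) (winv UR)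
                         then state_of_wz (winv UR) (zinv UL) else UR)).
  apply (ex_RInt_glue _ (fun _ => G UL) g2 (x0 + zinv UL * d)).
  - intros x Hx. unfold riemann_sol, riemann_xi.
    destruct (Rle_dec t t0); [lra|].
    destruct (Rlt_dec _ (zinv UL)) as [|Hn]; [reflexivity|]. exfalso. apply Hn, Hxi, Hx.
  - intros x Hx. unfold riemann_sol, riemann_xi, g2.
    destruct (Rle_dec t t0); [lra|].
    destruct (Rlt_dec _ (zinv UL)) as [Hn|]; [|reflexivity]. apply Hxi in Hn. lra.
  - intros a' b'. apply ex_RInt_const.
  - apply (ex_RInt_glue _ (fun _ => G (state_of_wz (winv UR) (zinv UL))) (fun _ => G UR)
             (x0 + winv UR * d)).
    + intros x Hx. unfold g2.
      destruct (Rlt_dec _ (winv UR)) as [|Hn]; [reflexivity|]. exfalso. apply Hn, Hxi, Hx.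
    + intros x Hx. unfold g2.
      destruct (Rlt_dec _ (winv UR)) as [Hn|]; [|reflexivity]. apply Hxi in Hn. lra.
    + intros a' b'. apply ex_RInt_const.
    + intros a' b'. apply ex_RInt_const.
Qed.

Lemma RInt_average_affine_nonneg (f g : R -> R) (a b al be ga : R) : a < b ->
  ex_RInt f a b -> ex_RInt g a b ->
  (forall x, a < x < b -> 0 <= al * f x + be * g x + ga) ->
  0 <= al * (RInt f a b / (b - a)) + be * (RInt g a b / (b - a)) + ga.
Proof.
  intros Hab Hf Hg H.
  assert (Hi : is_RInt (fun x => al * f x + be * g x + ga) a b
                 (al * RInt f a b + be * RInt g a b + (b - a) * ga)).
  { apply (is_RInt_plus (fun x => al * f x + be * g x) (fun _ => ga)).
    - apply (is_RInt_plus (fun x => al * f x) (fun x => be * g x)).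
      + apply (is_RInt_scal f), (RInt_correct f), Hf.
      + apply (is_RInt_scal g), (RInt_correct g), Hg.
    - exact (@is_RInt_const R_NormedModule a b ga). }
  assert (Hge : 0 <= RInt (fun x => al * f x + be * g x + ga) a b).
  { apply RInt_ge_0; [lra | eexists; exact Hi | exact H]. }
  rewrite (is_RInt_unique _ _ _ _ Hi) in Hge.
  replace (al * (RInt f a b / (b - a)) + be * (RInt g a b / (b - a)) + ga)
    with ((al * RInt f a b + be * RInt g a b + (b - a) * ga) / (b - a)) by (field; lra).
  apply Rdiv_le_0_compat; lra.
Qed.

Lemma region_average (b : bool) (a e : R) (F1 F2 : R -> R) (x1 x2 : R) :
  x1 < x2 -> 0 < e -> ex_RInt F1 x1 x2 -> ex_RInt F2 x1 x2 ->
  (forall x, x1 < x < x2 -> e <= F1 x /\ region b a (F1 x, F2 x)) ->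
  region b a (RInt F1 x1 x2 / (x2 - x1), RInt F2 x1 x2 / (x2 - x1)).
Proof.
  intros Hx He HI1 HI2 Hpt.
  assert (Haff : forall x, x1 < x < x2 ->
            if b then 0 <= - a * F1 x + F2 x + 1 /\ 0 <= - F2 x + 1
            else 0 <= F2 x + 1 /\ 0 <= - a * F1 x - F2 x + 1).
  { intros x Hxx. destruct (Hpt x Hxx) as [HF1 HU].
    apply (region_iff_affine b a (F1 x, F2 x)) in HU; [exact HU | simpl; lra]. }
  apply region_iff_affine; simpl.
  - pose proof (RInt_average_affine_nonneg F1 F2 _ _ 1 0 (- e) Hx HI1 HI2
                  (fun x Hxx => ltac:(pose proof (proj1 (Hpt x Hxx)); lra))).
    lra.
  - destruct b; split.
    + pose proof (RInt_average_affine_nonneg F1 F2 _ _ (- a) 1 1 Hx HI1 HI2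
                    (fun x Hxx => ltac:(pose proof (proj1 (Haff x Hxx)); lra))). lra.
    + pose proof (RInt_average_affine_nonneg F1 F2 _ _ 0 (-1) 1 Hx HI1 HI2
                    (fun x Hxx => ltac:(pose proof (proj2 (Haff x Hxx)); lra))). lra.
    + pose proof (RInt_average_affine_nonneg F1 F2 _ _ 0 1 1 Hx HI1 HI2
                    (fun x Hxx => ltac:(pose proof (proj1 (Haff x Hxx)); lra))). lra.
    + pose proof (RInt_average_affine_nonneg F1 F2 _ _ (- a) (-1) 1 Hx HI1 HI2
                    (fun x Hxx => ltac:(pose proof (proj2 (Haff x Hxx)); lra))). lra.
Qed.

Lemma ex_RInt_cell_sol (G : State -> R) k B h l Un (n : nat) (j : Z) (t a b : R) :
  INR n * h < t -> ex_RInt (fun x => G (cell_sol k B h l Un n j x t)) a b.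
Proof.
  intro Ht.
  exact (ex_RInt_riemann_sol
           (fun U => G (fst U + Rsrc k B U t * (t - INR n * h),
                        snd U + Ssrc k B U t * (t - INR n * h)))
           _ _ _ _ _ a b Ht).
Qed.

Lemma LF_approx_cell k B h l rho0 m0 (x t : R) : 0 < h -> 0 <= t ->
  exists (n : nat) (j : Z),
    INR n * h <= t < INR n * h + h /\ Z.Odd (Z.of_nat n + (j - 1)) /\
    LF_approx k B h l rho0 m0 x t = cell_sol k B h l (LF_grid k B h l rho0 m0 n) n j x t.
Proof.
  intros Hh Ht. set (n := Z.to_nat (Int_part (t / h))).
  set (p := if Nat.even n then 0%Z else 1%Z).
  exists n, (2 * Int_part ((x / l - IZR p + 1) / 2) + p)%Z.
  split; [|split; [|reflexivity]].
  - destruct (base_Int_part (t / h)) as [I1 I2].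
    assert (0 <= t / h) by (apply Rdiv_le_0_compat; lra).
    assert (Hz : (0 <= Int_part (t / h))%Z)
      by (assert (-1 < Int_part (t / h))%Z by (apply lt_IZR; simpl; lra); lia).
    assert (HnI : INR n = IZR (Int_part (t / h)))
      by (unfold n; rewrite INR_IZR_INZ, Z2Nat.id by exact Hz; reflexivity).
    rewrite HnI. assert (t = t / h * h) by (field; lra). split; nra.
  - unfold p. destruct (Nat.even n) eqn:E.
    + apply Nat.even_spec in E. destruct E as [m Hm].
      exists (Z.of_nat m + Int_part ((x / l - IZR 0 + 1) / 2) - 1)%Z. lia.
    + assert (E' : Nat.odd n = true) by (rewrite <- Nat.negb_even, E; reflexivity).
      apply Nat.odd_spec in E'. destruct E' as [m Hm].
      exists (Z.of_nat m + Int_part ((x / l - IZR 1 + 1) / 2))%Z. lia.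
Qed.

(* At a node (i l, n h) with n + i odd, [LF_approx] reads the left datum of the cell
   [j = i + 1] at its initial time, i.e. the grid value itself. *)
Lemma LF_approx_at_node k B h l rho0 m0 (n : nat) (i : Z) :
  0 < h -> 0 < l -> Z.Odd (Z.of_nat n + i) ->
  LF_approx k B h l rho0 m0 (IZR i * l) (INR n * h) = LF_grid k B h l rho0 m0 n i.
Proof.
  intros Hh Hl [q Hq]. unfold LF_approx.
  replace (INR n * h / h) with (INR n) by (field; lra).
  rewrite Int_part_INR, Nat2Z.id. cbv zeta.
  set (p := if Nat.even n then 0%Z else 1%Z).
  assert (Hp : exists r, (i - p + 1 = 2 * r)%Z).
  { unfold p. destruct (Nat.even n) eqn:E.
    - apply Nat.even_spec in E. destruct E as [m Hm]. exists (q - Z.of_nat m + 1)%Z. lia.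
    - assert (E' : Nat.odd n = true) by (rewrite <- Nat.negb_even, E; reflexivity).
      apply Nat.odd_spec in E'. destruct E' as [m Hm]. exists (q - Z.of_nat m)%Z. lia. }
  destruct Hp as [r Hr].
  replace ((IZR i * l / l - IZR p + 1) / 2) with (IZR r).
  2:{ assert (IZR i = 2 * IZR r + IZR p - 1)
        by (rewrite <- mult_IZR, <- plus_IZR, <- minus_IZR; f_equal; lia).
      field_simplify; lra. }
  rewrite <- (Int_part_spec (IZR r) r) by lra.
  replace (2 * r + p)%Z with (i + 1)%Z by lia.
  unfold cell_sol, riemann_sol. cbv zeta. replace (i + 1 - 1)%Z with i by ring.
  destruct (Rle_dec (INR n * h) (INR n * h)) as [_|]; [|lra].
  destruct (Rlt_dec (IZR i * l) (IZR (i + 1) * l)) as [_|Hn].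
  2:{ exfalso. apply Hn. rewrite plus_IZR. nra. }
  destruct (LF_grid k B h l rho0 m0 n i) as [rho m]. simpl. f_equal; ring.
Qed.

Section Scheme.

Variables (k B : R -> R) (T Kk Kb C L A h : R).
Hypothesis Hkk : forall t, 0 <= t <= T -> Rabs (Derive k t / k t) <= Kk.
Hypothesis Hbb : forall t, 0 <= t <= T -> Rabs (B t * Derive B t) <= Kb.
Hypothesis Hrate : forall t, 0 <= t <= T -> 0 <= relax_rate k B t <= C.
Hypothesis HLpos : 0 < L.
Hypothesis HA : 2 * C + (Kk + L * L * Kb) <= A.
Hypothesis Hh : 0 < h.
Hypothesis HhK : h * (Kk + L * L * Kb) <= 1 / 2.
Hypothesis HhC : h * C <= 1 / 2.

Lemma cell_sol_region (b : bool) (a l : R) (Un : Z -> State) (n : nat) (j : Z) (x t : R) :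
  0 < a -> region b a (Un (j - 1)%Z) -> region b a (Un (j + 1)%Z) ->
  wz_bounded L (Un (j - 1)%Z) -> wz_bounded L (Un (j + 1)%Z) ->
  INR n * h <= t <= INR n * h + h -> t <= T ->
  1 / (2 * L) <= fst (cell_sol k B h l Un n j x t) /\
  region b (a * exp (- A * (t - INR n * h))) (cell_sol k B h l Un n j x t).
Proof.
  intros Ha HL HR BL BR Ht HtT.
  assert (Ht0 : 0 <= t <= T) by (pose proof (pos_INR n); nra).
  rewrite cell_sol_source_step.
  destruct (riemann_sol_region b a L _ _ (IZR j * l) (INR n * h) x t Ha HL HR BL BR)
    as [HV BV].
  pose proof (Hkk t Ht0). pose proof (Hbb t Ht0).
  destruct (source_step_region b a L (Kk + L * L * Kb) C A (Derive k t / k t)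
              (B t * Derive B t) (relax_rate k B t) (t - INR n * h) _ Ha HV BV)
    as [Hrho HU]; try apply Hrate; try nra.
  split; [|exact HU].
  pose proof (fst_ge_of_wz_bounded L _ (proj1 HV) BV).
  replace (1 / (2 * L)) with (1 / L / 2) by (field; lra). lra.
Qed.

Lemma LF_step_region (b : bool) (a l : R) (Un : Z -> State) (n : nat) (j : Z) :
  0 < a -> 0 < l -> INR (S n) * h <= T ->
  region b a (Un (j - 1)%Z) -> region b a (Un (j + 1)%Z) ->
  wz_bounded L (Un (j - 1)%Z) -> wz_bounded L (Un (j + 1)%Z) ->
  region b (a * exp (- A * h)) (LF_step k B h l Un n j).
Proof.
  intros Ha Hl HT HL HR BL BR.
  set (t1 := INR (S n) * h) in *.
  assert (Et1 : t1 = INR n * h + h) by (unfold t1; rewrite S_INR; ring).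
  set (F1 := fun x => fst (cell_sol k B h l Un n j x t1)).
  set (F2 := fun x => snd (cell_sol k B h l Un n j x t1)).
  assert (Hpt : forall x, 1 / (2 * L) <= F1 x /\ region b (a * exp (- A * h)) (F1 x, F2 x)).
  { intro x. unfold F1, F2. rewrite <- surjective_pairing.
    assert (Ht1 : INR n * h <= t1 <= INR n * h + h) by lra.
    destruct (cell_sol_region b a l Un n j x t1 Ha HL HR BL BR Ht1 HT) as [Hrho HU].
    replace (t1 - INR n * h) with h in HU by lra. split; assumption. }
  assert (Hab : (IZR j - 1) * l < (IZR j + 1) * l) by lra.
  assert (HI1 : ex_RInt F1 ((IZR j - 1) * l) ((IZR j + 1) * l))
    by (apply (ex_RInt_cell_sol fst); lra).
  assert (HI2 : ex_RInt F2 ((IZR j - 1) * l) ((IZR j + 1) * l))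
    by (apply (ex_RInt_cell_sol snd); lra).
  unfold LF_step. cbv zeta. fold t1. fold F1 F2.
  replace (2 * l) with ((IZR j + 1) * l - (IZR j - 1) * l) by ring.
  apply (region_average b _ (1 / (2 * L))); auto.
  apply Rdiv_lt_0_compat; lra.
Qed.

Variables (rho0 m0 : R -> R) (l delta0 : R) (b : bool).
Hypothesis Hl : 0 < l.
Hypothesis Hdelta0 : 0 < delta0.
Hypothesis Hspeed : l / (2 * h) <= L.
Hypothesis Hcfl : CFL T k B h l rho0 m0.
Hypothesis Hinit : forall x, region b delta0 (rho0 x, m0 x).

Lemma LF_grid_bounded (n : nat) (i : Z) : INR n * h <= T -> Z.Odd (Z.of_nat n + i) ->
  wz_bounded L (LF_grid k B h l rho0 m0 n i).
Proof.
  intros Hn Hi. rewrite <- (LF_approx_at_node k B h l rho0 m0 n i Hh Hl Hi).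
  assert (0 <= INR n * h) by (apply Rmult_le_pos; [apply pos_INR | lra]).
  destruct (Hcfl (IZR i * l) (INR n * h)) as [Hz Hw]; [lra|].
  split; lra.
Qed.

Lemma LF_grid_region (n : nat) : INR n * h <= T -> forall i, Z.Odd (Z.of_nat n + i) ->
  region b (delta0 * exp (- A * (INR n * h))) (LF_grid k B h l rho0 m0 n i).
Proof.
  induction n as [|n IH]; intros Hn i Hi.
  - simpl. rewrite Rmult_0_l, Rmult_0_r, exp_0, Rmult_1_r. apply Hinit.
  - assert (Hn' : INR n * h <= T) by (rewrite S_INR in Hn; lra).
    destruct Hi as [q Hq].
    assert (HiL : Z.Odd (Z.of_nat n + (i - 1))) by (exists (q - 1)%Z; lia).
    assert (HiR : Z.Odd (Z.of_nat n + (i + 1))) by (exists q; lia).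
    replace (delta0 * exp (- A * (INR (S n) * h)))
      with (delta0 * exp (- A * (INR n * h)) * exp (- A * h))
      by (rewrite Rmult_assoc, <- exp_plus, S_INR; f_equal; f_equal; ring).
    apply LF_step_region; auto.
    + apply Rmult_lt_0_compat; [exact Hdelta0 | apply exp_pos].
    + apply LF_grid_bounded; assumption.
    + apply LF_grid_bounded; assumption.
Qed.

Lemma LF_approx_region (x t : R) : 0 <= t <= T ->
  region b (delta0 * exp (- A * t)) (LF_approx k B h l rho0 m0 x t).
Proof.
  intros Ht.
  destruct (LF_approx_cell k B h l rho0 m0 x t Hh (proj1 Ht)) as [n [j [Hn [Hj ->]]]].
  assert (Hn' : INR n * h <= T) by lra.
  assert (HjR : Z.Odd (Z.of_nat n + (j + 1))) by (destruct Hj as [q Hq]; exists (q + 1)%Z; lia).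
  replace (delta0 * exp (- A * t))
    with (delta0 * exp (- A * (INR n * h)) * exp (- A * (t - INR n * h)))
    by (rewrite Rmult_assoc, <- exp_plus; f_equal; f_equal; ring).
  apply (cell_sol_region b); try lra.
  - apply Rmult_lt_0_compat; [exact Hdelta0 | apply exp_pos].
  - apply LF_grid_region; assumption.
  - apply LF_grid_region; assumption.
  - apply LF_grid_bounded; assumption.
  - apply LF_grid_bounded; assumption.
Qed.

End Scheme.

Lemma relax_rate_nonneg (k B : R -> R) (T t : R) :
  0 < T -> 0 <= t <= T -> ex_derive k t -> ex_derive B t ->
  (forall s, 0 <= s <= T -> 0 < k s /\ 0 < B s) ->
  (forall s u, 0 <= s -> s <= u -> u <= T -> ln (B s ^ 2 * k s) <= ln (B u ^ 2 * k u)) ->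
  0 <= relax_rate k B t.
Proof.
  intros HT Ht Hk HB Hpos Hln.
  destruct (Hpos t Ht) as [Hkt HBt].
  assert (Hmono : forall s u, 0 <= s -> s <= u -> u <= T -> B s ^ 2 * k s <= B u ^ 2 * k u).
  { intros s u Hs Hsu Hu.
    destruct (Hpos s ltac:(lra)), (Hpos u ltac:(lra)).
    destruct (Rle_lt_dec (B s ^ 2 * k s) (B u ^ 2 * k u)) as [|Hlt]; [assumption|].
    assert (H3 : 0 < B u ^ 2 * k u) by (apply Rmult_lt_0_compat; [apply pow_lt|]; lra).
    pose proof (ln_increasing _ _ H3 Hlt). pose proof (Hln s u Hs Hsu Hu). lra. }
  assert (Hder : is_derive (fun s => B s ^ 2 * k s) t
                   (2 * B t * Derive B t * k t + B t ^ 2 * Derive k t)).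
  { auto_derive; [tauto|].
    change (Derive (fun x => B x) t) with (Derive B t).
    change (Derive (fun x => k x) t) with (Derive k t). ring. }
  pose proof (derive_nonneg_of_monotone_on _ T t _ HT Ht Hmono Hder).
  unfold relax_rate.
  replace (Derive B t / B t + Derive k t / (2 * k t))
    with ((2 * B t * Derive B t * k t + B t ^ 2 * Derive k t) / (2 * B t ^ 2 * k t))
    by (field; lra).
  apply Rdiv_le_0_compat; [assumption|].
  apply Rmult_lt_0_compat; [apply Rmult_lt_0_compat; [lra | apply pow_lt; lra] | lra].
Qed.

Lemma source_coefficients_bounded (k B : R -> R) (T : R) : 0 <= T ->
  (forall (n : nat) (t : R), ex_derive (Derive_n k n) t) ->
  (forall (n : nat) (t : R), ex_derive (Derive_n B n) t) ->
  (forall t, 0 <= t <= T -> 0 < k t /\ 0 < B t) ->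
  exists Kk Kb C, 0 <= Kk /\ 0 <= Kb /\ 0 <= C /\
    forall t, 0 <= t <= T -> Rabs (Derive k t / k t) <= Kk /\
      Rabs (B t * Derive B t) <= Kb /\ Rabs (relax_rate k B t) <= C.
Proof.
  intros HT Hk HB Hpos.
  assert (ck : forall t, continuity_pt k t)
    by (intro t; apply continuity_pt_of_ex_derive, (Hk 0%nat)).
  assert (cB : forall t, continuity_pt B t)
    by (intro t; apply continuity_pt_of_ex_derive, (HB 0%nat)).
  assert (cDk : forall t, continuity_pt (Derive k) t)
    by (intro t; apply continuity_pt_of_ex_derive, (Hk 1%nat)).
  assert (cDB : forall t, continuity_pt (Derive B) t)
    by (intro t; apply continuity_pt_of_ex_derive, (HB 1%nat)).
  destruct (bounded_on_compact (fun t => Derive k t / k t) T HT) as [Kk [HKk BKk]].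
  { intros t Ht. apply continuity_pt_div; auto. destruct (Hpos t Ht); lra. }
  destruct (bounded_on_compact (fun t => B t * Derive B t) T HT) as [Kb [HKb BKb]].
  { intros t Ht. apply continuity_pt_mult; auto. }
  destruct (bounded_on_compact (relax_rate k B) T HT) as [C [HC BC]].
  { intros t Ht. destruct (Hpos t Ht). unfold relax_rate.
    apply continuity_pt_plus; apply continuity_pt_div; auto; try lra.
    apply continuity_pt_mult; auto. apply continuity_pt_const. intros ? ?; reflexivity. }
  exists Kk, Kb, C. repeat split; auto.
Qed.

Lemma LF_approx_invariant_region (T : R) (k B : R -> R) (Lam : R) (rho0 m0 : R -> R)
    (delta0 : R) (b : bool) :
  0 < T -> 0 < Lam -> 0 < delta0 ->
  (forall (n : nat) (t : R), ex_derive (Derive_n k n) t) ->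
  (forall (n : nat) (t : R), ex_derive (Derive_n B n) t) ->
  (forall t, 0 <= t <= T -> 0 < k t /\ 0 < B t) ->
  (forall s t, 0 <= s -> s <= t -> t <= T -> ln (B s ^ 2 * k s) <= ln (B t ^ 2 * k t)) ->
  (forall x, region b delta0 (rho0 x, m0 x)) ->
  exists h0 A : R, 0 < h0 /\ 0 < A /\
    forall h l : R, 0 < h -> h <= h0 -> 0 < l -> l / (2 * h) <= Lam ->
      CFL T k B h l rho0 m0 ->
      forall x t, 0 <= t <= T -> region b (delta0 * exp (- A * T)) (LF_approx k B h l rho0 m0 x t).
Proof.
  intros HT HLam Hd Hk HB Hpos Hln Hinit.
  destruct (source_coefficients_bounded k B T ltac:(lra) Hk HB Hpos)
    as [Kk [Kb [C [HKk [HKb [HC Hbounds]]]]]].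
  set (K := Kk + Lam * Lam * Kb).
  assert (HK : 0 <= K) by (unfold K; nra).
  exists (1 / (2 * (K + C + 1))), (2 * C + K + 1).
  split; [apply Rdiv_lt_0_compat; lra|]. split; [lra|].
  intros h l Hh Hh0 Hl Hspeed Hcfl x t Ht.
  apply Rle_div_r in Hh0; [|lra].
  apply (region_anti b (delta0 * exp (- (2 * C + K + 1) * t))).
  - apply Rmult_le_compat_l; [lra|].
    destruct (Rle_lt_or_eq_dec _ _ (proj2 Ht)) as [HtT | ->]; [|lra].
    apply Rlt_le, exp_increasing. nra.
  - apply (LF_approx_region k B T Kk Kb C Lam); try assumption; try (unfold K in *; nra).
    + intros s Hs. apply Hbounds, Hs.
    + intros s Hs. apply Hbounds, Hs.
    + intros s Hs. split; [|apply Rabs_le_between, Hbounds, Hs].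
      apply (relax_rate_nonneg k B T); auto. apply (Hk 0%nat). apply (HB 0%nat).
Qed.

Theorem theorem1 (T : R) (k B : R -> R) (Lam : R) (rho0 m0 : R -> R) (delta0 P0 : R) :
  0 < T -> 0 < Lam -> 0 < delta0 -> 0 < P0 ->
  (* k, B smooth *)
  (forall (n : nat) (t : R), ex_derive (Derive_n k n) t) ->
  (forall (n : nat) (t : R), ex_derive (Derive_n B n) t) ->
  (* positive on [0,T] *)
  (forall t, 0 <= t <= T -> 0 < k t /\ 0 < B t) ->
  (* B'' = k^2 B, with B = 1, B' = 0 at y = t - T = 0 *)
  (forall t, 0 <= t <= T -> Derive_n B 2 t = (k t) ^ 2 * B t) ->
  B T = 1 -> Derive B T = 0 ->
  (* ln(B^2 k) nondecreasing on [0,T] *)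
  (forall s t, 0 <= s -> s <= t -> t <= T ->
     ln ((B s) ^ 2 * k s) <= ln ((B t) ^ 2 * k t)) ->
  (forall x, 0 < rho0 x) ->
  ((forall x, delta0 <= winv (rho0 x, m0 x) <= P0 /\ - P0 <= zinv (rho0 x, m0 x) <= 0) ->
   exists h0 P A : R, 0 < h0 /\ 0 < P /\ 0 < A /\
     forall h l : R, 0 < h -> h <= h0 -> 0 < l -> l / (2 * h) <= Lam ->
       CFL T k B h l rho0 m0 ->
       forall x t, 0 <= t <= T ->
         delta0 * exp (- A * T) <= winv (LF_approx k B h l rho0 m0 x t) <= P /\
         - P <= zinv (LF_approx k B h l rho0 m0 x t) <= 0)
  /\
  ((forall x, 0 <= winv (rho0 x, m0 x) <= P0 /\ - P0 <= zinv (rho0 x, m0 x) <= - delta0) ->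
   exists h0 P A : R, 0 < h0 /\ 0 < P /\ 0 < A /\
     forall h l : R, 0 < h -> h <= h0 -> 0 < l -> l / (2 * h) <= Lam ->
       CFL T k B h l rho0 m0 ->
       forall x t, 0 <= t <= T ->
         0 <= winv (LF_approx k B h l rho0 m0 x t) <= P /\
         - P <= zinv (LF_approx k B h l rho0 m0 x t) <= - (delta0 * exp (- A * T))).
Proof.
  (* Only the monotonicity of ln (B^2 k) enters. *)
  intros HT HLam Hd HP0 Hk HB Hpos _ _ _ Hln Hrho.
  split; intros Hinit.
  - destruct (LF_approx_invariant_region T k B Lam rho0 m0 delta0 true HT HLam Hd Hk HB Hpos Hln)
      as [h0 [A [Hh0 [HA Hreg]]]].
    { intro x. split; [apply Hrho | simpl; destruct (Hinit x); lra]. }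
    exists h0, Lam, A. split; [exact Hh0|]. split; [exact HLam|]. split; [exact HA|].
    intros h l Hh Hhh0 Hl Hspeed Hcfl x t Ht.
    destruct (Hreg h l Hh Hhh0 Hl Hspeed Hcfl x t Ht) as [_ [Hw Hz]].
    destruct (Hcfl x t Ht) as [Hz' Hw']. apply Rabs_def2 in Hz', Hw'.
    repeat split; lra.
  - destruct (LF_approx_invariant_region T k B Lam rho0 m0 delta0 false HT HLam Hd Hk HB Hpos Hln)
      as [h0 [A [Hh0 [HA Hreg]]]].
    { intro x. split; [apply Hrho | simpl; destruct (Hinit x); lra]. }
    exists h0, Lam, A. split; [exact Hh0|]. split; [exact HLam|]. split; [exact HA|].
    intros h l Hh Hhh0 Hl Hspeed Hcfl x t Ht.
    destruct (Hreg h l Hh Hhh0 Hl Hspeed Hcfl x t Ht) as [_ [Hw Hz]].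
    destruct (Hcfl x t Ht) as [Hz' Hw']. apply Rabs_def2 in Hz', Hw'.
    repeat split; lra.
Qed.
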